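(* Assume the Rainbow Conjecture (RC) stated in the context holds. Then every finite digraph $H$ with no loops and no digons has a vertex $v$ with $|N^+_2(v)| \geq |N^+(v)|$.
   Context: All digraphs are finite. A digon is a pair of edges $(u,v),(v,u)$. For a vertex $v$ of a digraph, $N^+(v)$ is the set of vertices at directed out-distance exactly $1$ from $v$, and $N^+_2(v)$ is the set of vertices at directed out-distance exactly $2$ from $v$ (distance $=$ length of a shortest directed path). Rainbow setting: let $G$ be a finite digraph on vertex set $V$ with no loops and no parallel edges (digons allowed), let $k \geq 1$ and $E_1,\dots,E_k \subseteq E(G)$. Each edge $e$ gets the label set $S_e=\{i : e \in E_i\}$, and $G_i=(V,E_i)$. A directed path or directed cycle $P$ in $G$ is rainbow if there is an injective map $\ell: E(P)\to\{1,\dots,k\}$ with $\ell(e)\in S_e$ for every $e \in E(P)$. The Rainbow Conjecture (RC) asserts: for every such $G$, $k$ and $E_1,\dots,E_k$, either $G$ contains a rainbow directed cycle, or there is a vertex $v$ such that the number of vertices $w \neq v$ for which there is a rainbow directed path from $v$ to $w$ is at least $\sum_{i=1}^k \delta^+_{G_i}(v)$, where $\delta^+_{G_i}(v)$ is the out-degree of $v$ in $G_i$. *)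

From mathcomp Require Import all_boot.
Set Implicit Arguments. Unset Strict Implicit. Unset Printing Implicit Defensive.

Section Digraphs.
Variable V : finType.

(* A finite digraph on V is an edge relation E : rel V; irreflexivity = no
   loops; no parallel edges is automatic.  The rainbow family E_1..E_k is
   Es : 'I_k -> rel V, with Es i u w meaning (u,w) \in E_i. *)

Definition dpath (E : rel V) (x : V) (p : seq V) : bool :=
  path E x p && uniq (x :: p).

Definition dcycle (E : rel V) (x : V) (p : seq V) : bool :=
  [&& p != [::], path E x (rcons p x) & uniq (x :: p)].

(* An edge list is rainbow if there is an injective labelling ls of its
   edges (position-wise; edges of a path/cycle are pairwise distinct)
   by colours in 'I_k with each edge in the colour class of its label. *)
Definition rainbow_edges (k : nat) (Es : 'I_k -> rel V) (es : seq (V * V)) : Prop :=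
  exists ls : seq 'I_k,
    [/\ size ls = size es, uniq ls &
        all (fun t => Es t.1 t.2.1 t.2.2) (zip ls es)].

Definition path_edges (x : V) (p : seq V) : seq (V * V) := zip (x :: p) p.
Definition cycle_edges (x : V) (p : seq V) : seq (V * V) := zip (x :: p) (rcons p x).

Definition has_rainbow_cycle (E : rel V) (k : nat) (Es : 'I_k -> rel V) : Prop :=
  exists x p, dcycle E x p /\ rainbow_edges Es (cycle_edges x p).

Definition rainbow_reach (E : rel V) (k : nat) (Es : 'I_k -> rel V) (v w : V) : Prop :=
  exists p, [/\ dpath E v p, last v p = w & rainbow_edges Es (path_edges v p)].

Definition outN1 (E : rel V) (v : V) : {set V} := [set w | (w != v) && E v w].
Definition outN2 (E : rel V) (v : V) : {set V} :=
  [set w | [&& w != v, ~~ E v w & [exists u, E v u && E u w]]].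

End Digraphs.

(* The Rainbow Conjecture.  "the number of w <> v rainbow-reachable from v is
   at least s" is rendered as: some set W of such w has #|W| >= s. *)
Definition RainbowConjecture : Prop :=
  forall (V : finType) (E : rel V), 0 < #|V| -> irreflexive E ->
  forall (k : nat) (Es : 'I_k -> rel V), 0 < k ->
    (forall i u w, Es i u w -> E u w) ->
    has_rainbow_cycle E Es \/
    exists v : V, exists W : {set V},
      (forall w, w \in W -> w != v /\ rainbow_reach E Es v w) /\
      \sum_(i < k) #|[set w | Es i v w]| <= #|W|.

From mathcomp Require Import all_boot.

Set Implicit Arguments.
Unset Strict Implicit.

(* Apply RC to H with two colour classes, both equal to H.  A rainbow path or
   cycle then has at most two edges.  Every cycle of H has at least three
   edges (no loops, no digons), so there is no rainbow cycle, and RC yields a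
   vertex v with 2 |N^+(v)| rainbow-reachable vertices; these are reached in
   at most two steps, so they all lie in N^+(v) or N^+_2(v). *)

Section RainbowDigraphs.
Context {V : finType}.
Implicit Types (E : rel V) (v w x : V) (p : seq V).

Lemma rainbow_edges_size k (Es : 'I_k -> rel V) es :
  rainbow_edges Es es -> size es <= k.
Proof.
move=> [ls [<- uniq_ls _]]; rewrite -(card_uniqP uniq_ls).
by have := max_card (mem ls); rewrite card_ord.
Qed.

Lemma size_path_edges x p : size (path_edges x p) = size p.
Proof. by rewrite /path_edges size_zip /= (minn_idPr (leqnSn _)). Qed.

Lemma size_cycle_edges x p : size (cycle_edges x p) = (size p).+1.
Proof. by rewrite /cycle_edges size_zip /= size_rcons minnn. Qed.

Lemma dcycle_size_gt1 E x p :
  (forall u w, E u w -> ~~ E w u) -> dcycle E x p -> 1 < size p.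
Proof.
move=> no_digon; case: p => [|y [|z q]] //= /and3P [_ /= /and3P [Exy Eyx _] _].
by have := no_digon _ _ Exy; rewrite Eyx.
Qed.

Lemma outN1_irreflexive E v : irreflexive E -> outN1 E v = [set w | E v w].
Proof.
move=> irrE; apply/setP => w; rewrite !inE andb_idl // => Evw.
by apply: contraTneq Evw => ->; rewrite irrE.
Qed.

Lemma dpath_short_last E v p :
  dpath E v p -> size p <= 2 -> last v p != v ->
  last v p \in outN1 E v :|: outN2 E v.
Proof.
rewrite !inE; case: p => [|a [|b [|c q]]] //=; first by rewrite eqxx.
  by rewrite /dpath /= andbT => /andP [-> _] _ ->.
move=> /andP [/and3P [Eva Eab _] _] _ ->; case: (E v b) => //=.
by apply/existsP; exists a; rewrite Eva Eab.
Qed.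

End RainbowDigraphs.

Theorem mainTheorem1 :
  RainbowConjecture ->
  forall (V : finType) (H : rel V),
    0 < #|V| ->
    irreflexive H ->
    (forall u w, H u w -> ~~ H w u) ->
    exists v : V, #|outN1 H v| <= #|outN2 H v|.
Proof.
move=> RC V H V_gt0 irrH no_digon.
have [[x [p [cyc_xp rainbow]]]|[v [W [reachW sizeW]]]] :=
  RC V H V_gt0 irrH 2 (fun _ => H) isT (fun _ _ _ => id).
  have := rainbow_edges_size rainbow; rewrite size_cycle_edges ltnS leqNgt.
  by rewrite (dcycle_size_gt1 no_digon cyc_xp).
exists v.
have W_sub : W \subset outN1 H v :|: outN2 H v.
  apply/subsetP => w /reachW [w_neq_v [p [path_p last_p rainbow]]].
  rewrite -last_p in w_neq_v *; apply: dpath_short_last path_p _ w_neq_v.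
  by rewrite -(size_path_edges v) (rainbow_edges_size rainbow).
move: sizeW; rewrite big_ord_recr big_ord1 /= -outN1_irreflexive // => sizeW.
have := leq_trans sizeW (leq_trans (subset_leq_card W_sub) (leq_card_setU _ _)).
by rewrite leq_add2l.
Qed.
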